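(* Let $\vec d=(\vec a,\vec b)$ be a bidegree sequence of length $n$ with $\sum_i a_i=\sum_i b_i=n\bar c$ and $m:=\min\vec d\le n-1$. Define $k_*=m+1+\sqrt{(m+1)^2+n(\bar c-2m)}$, and let $k=\lceil k_*\rceil$ if $(m+1)^2+n(\bar c-2m)\ge0$ (i.e. $k_*$ is real) and $k=1$ otherwise. If $$\max\vec d\le\min\Big(\Big\lfloor n\frac{\bar c-m}{k}+m\Big\rfloor,\ n-1\Big),$$ then $\vec d$ is graphic.
   Context: A bidegree sequence of length $n$ is a pair $\vec d=(\vec a,\vec b)$ with $\vec a=(a_1,\dots,a_n)\in\mathbb{N}_0^n$ and $\vec b=(b_1,\dots,b_n)\in\mathbb{N}_0^n$. It is graphic with loops if there is an $n\times n$ matrix with entries in $\{0,1\}$ whose $i$th row sum is $a_i$ and whose $i$th column sum is $b_i$ for every $i\in[1..n]$; it is graphic if such a matrix exists with all diagonal entries equal to $0$. $\max\vec d$ and $\min\vec d$ denote the maximum and minimum over all $2n$ entries $a_1,\dots,a_n,b_1,\dots,b_n$. The number $\bar c$ (the average degree) is defined by $\sum_i a_i=\sum_i b_i=n\bar c$. *)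

From mathcomp Require Import all_boot.
From Stdlib Require Import Reals ZArith.

Set Implicit Arguments.
Unset Strict Implicit.
Unset Printing Implicit Defensive.

(* graphic with loops: some 0/1 matrix (relation M on 'I_n) has row sums a
   and column sums b. *)
Definition graphic_with_loops (n : nat) (a b : 'I_n -> nat) : Prop :=
  exists M : rel 'I_n,
    (forall i, #|[set j | M i j]| = a i) /\ (forall j, #|[set i | M i j]| = b j).

Definition graphic (n : nat) (a b : 'I_n -> nat) : Prop :=
  exists M : rel 'I_n,
    (forall i, #|[set j | M i j]| = a i) /\ (forall j, #|[set i | M i j]| = b j)
    /\ (forall i, ~~ M i i).

(* max d over all 2n entries (0 for n = 0). *)
Definition dmax (n : nat) (a b : 'I_n -> nat) : nat :=
  \max_(i < n) maxn (a i) (b i).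

(* min d over all 2n entries (meaningful for n > 0). *)
Definition dmin (n : nat) (a b : 'I_n -> nat) : nat :=
  \big[minn/dmax a b]_(i < n) minn (a i) (b i).

(* floor and ceiling on Stdlib reals: up x is the integer with x < up x <= x+1 *)
Definition Rfloor (x : R) : Z := (up x - 1)%Z.
Definition Rceil (x : R) : Z := (- Rfloor (- x))%Z.

Definition cbar (n : nat) (a : 'I_n -> nat) : R :=
  (INR (\sum_(i < n) a i) / INR n)%R.

Definition disc (n : nat) (a b : 'I_n -> nat) : R :=
  let m := INR (dmin a b) in
  ((m + 1) ^ 2 + INR n * (cbar a - 2 * m))%R.

Definition kstar (n : nat) (a b : 'I_n -> nat) : R :=
  (INR (dmin a b) + 1 + sqrt (disc a b))%R.

Definition kk (n : nat) (a b : 'I_n -> nat) : Z :=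
  if Rle_dec 0 (disc a b) then Rceil (kstar a b) else 1%Z.

Definition bound6 (n : nat) (a b : 'I_n -> nat) : Z :=
  Rfloor (INR n * (cbar a - INR (dmin a b)) / IZR (kk a b) + INR (dmin a b))%R.

From mathcomp Require Import all_boot zify.
From Stdlib Require Import Reals ZArith Lra Lia.
Set Implicit Arguments. Unset Strict Implicit. Unset Printing Implicit Defensive.

(* A 0/1 matrix supported on a set E of allowed cells, with row sums a and column sums b
   (of equal totals), exists iff every row set I and column set K satisfy the cut condition
   sum_I a <= sum_K b + #(E-cells in I x K^c).  This is proved by induction on E: delete
   an allowed cell; if the condition breaks, some cut through that cell is tight, the cell
   is put in the matrix, and the decreased degrees satisfy the condition for the smaller E
   because two tight cuts separating the cell in opposite directions would contradict
   submodularity of the cut capacity.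
   Off the diagonal, I x K^c contains at least p t - min p t allowed cells (p = #|I|,
   t = #|K^c|), and bounding sum_I a and sum_{K^c} b by m <= degrees <= M reduces the cut
   condition to an inequality in the integers p, t, which holds for all p, t as soon as
   M <= m + n (cbar - m) / k for an integer k >= k_*. *)

Lemma sum_indicator (T : finType) (P : pred T) : \sum_x (P x : nat) = #|[set x | P x]|.
Proof. by rewrite -sum1dep_card [RHS]big_mkcond; apply: eq_bigr => x _; case: (P x). Qed.

Lemma sum_setC (T : finType) (f : T -> nat) (A : {set T}) :
  \sum_(i in A) f i + \sum_(i in ~: A) f i = \sum_i f i.
Proof.
by rewrite [RHS](bigID (mem A)) /=; congr (_ + _); apply: eq_bigl => i; rewrite inE.
Qed.

Lemma sum_bounds (T : finType) (f : T -> nat) (A : {set T}) m M :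
  (forall x, m <= f x <= M) -> #|A| * m <= \sum_(i in A) f i <= #|A| * M.
Proof.
move=> fb; rewrite -!sum_nat_const.
by apply/andP; split; apply: leq_sum => x _; case/andP: (fb x).
Qed.

Section Realizability.
Variable T : finType.
Implicit Types (E F : {set T * T}) (I K : {set T}) (a b : T -> nat).

Definition capacity E I K := \sum_(x in E) ((x.1 \in I) && (x.2 \notin K) : nat).

Definition cut_condition E a b :=
  forall I K, \sum_(i in I) a i <= \sum_(j in K) b j + capacity E I K.

Definition realizable E a b := exists F : {set T * T},
  [/\ F \subset E, forall x, #|[set y | (x, y) \in F]| = a x
    & forall y, #|[set x | (x, y) \in F]| = b y].

Definition dec_at a i x := a x - (x == i).

Lemma capacity_setD1 E e I K : e \in E ->
  capacity E I K = ((e.1 \in I) && (e.2 \notin K)) + capacity (E :\ e) I K.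
Proof. by move=> eE; rewrite /capacity (big_setD1 _ eE). Qed.

Lemma leq_capacity E I1 K1 I2 K2 : I2 \subset I1 -> K1 \subset K2 ->
  capacity E I2 K2 <= capacity E I1 K1.
Proof.
move=> /subsetP sI /subsetP sK; apply: leq_sum => x _.
case: (boolP (x.1 \in I2)) => [/sI-> /= | _] //.
by case: (boolP (x.2 \in K1)) => [/sK-> | _] //=; rewrite leq_b1.
Qed.

Lemma capacity_submod E I1 K1 I2 K2 :
  capacity E (I1 :|: I2) (K1 :|: K2) + capacity E (I1 :&: I2) (K1 :&: K2)
  <= capacity E I1 K1 + capacity E I2 K2.
Proof.
rewrite /capacity -!big_split /=; apply: leq_sum => x _; rewrite !inE.
by case: (x.1 \in I1); case: (x.1 \in I2); case: (x.2 \in K1); case: (x.2 \in K2).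
Qed.

Lemma ltn_capacity E e I1 K1 I2 K2 : e \in E -> I2 \subset I1 -> K1 \subset K2 ->
  e.1 \in I1 -> e.2 \notin K1 -> (e.1 \notin I2) || (e.2 \in K2) ->
  capacity E I2 K2 < capacity E I1 K1.
Proof.
move=> eE sI sK eI1 eK1 out2.
rewrite !(capacity_setD1 I1 K1 eE) (capacity_setD1 _ _ eE).
have -> : (e.1 \in I2) && (e.2 \notin K2) = false.
  by move: out2; case: (e.1 \in I2); case: (e.2 \in K2).
by rewrite eI1 eK1 add0n add1n ltnS leq_capacity.
Qed.

Lemma capacity_submod_lt E e I1 K1 I2 K2 : e \in E ->
  e.1 \in I1 -> e.2 \notin K1 -> e.1 \notin I2 -> e.2 \in K2 ->
  capacity E (I1 :|: I2) (K1 :|: K2) + capacity E (I1 :&: I2) (K1 :&: K2)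
  < capacity E I1 K1 + capacity E I2 K2.
Proof.
move=> eE eI1 eK1 eI2 eK2; rewrite !(capacity_setD1 _ _ eE) !inE.
rewrite eI1 (negbTE eK1) (negbTE eI2) eK2 /=.
by rewrite !add0n add1n ltnS capacity_submod.
Qed.

Lemma sum_setUI a I1 I2 :
  \sum_(i in I1 :|: I2) a i + \sum_(i in I1 :&: I2) a i =
  \sum_(i in I1) a i + \sum_(i in I2) a i.
Proof.
rewrite !(big_mkcond (fun i => i \in _)) -!big_split; apply: eq_bigr => x _; rewrite !inE.
by case: (x \in I1); case: (x \in I2); rewrite /= ?addn0 ?add0n.
Qed.

Lemma sum_dec_at a i (P : pred T) : 0 < a i ->
  \sum_(x | P x) dec_at a i x + P i = \sum_(x | P x) a x.
Proof.
move=> ai; rewrite !(big_mkcond P) (bigD1 i) //= [RHS](bigD1 i) //=.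
rewrite /dec_at eqxx -addnAC; congr (_ + _).
  by case: (P i); rewrite ?addn0 // subn1 addn1 prednK.
by apply: eq_bigr => x /negbTE xi; rewrite xi subn0.
Qed.

Lemma card_row_setU1 F i j x : (i, j) \notin F ->
  #|[set y | (x, y) \in (i, j) |: F]| = #|[set y | (x, y) \in F]| + (x == i).
Proof.
move=> ijF; case: (eqVneq x i) => [->|xi].
  have -> : [set y | (i, y) \in (i, j) |: F] = j |: [set y | (i, y) \in F].
    by apply/setP => y; rewrite !inE xpair_eqE eqxx.
  by rewrite cardsU1 inE ijF addnC.
by rewrite addn0; apply: eq_card => y; rewrite !inE xpair_eqE (negbTE xi).
Qed.

Lemma card_col_setU1 F i j y : (i, j) \notin F ->
  #|[set x | (x, y) \in (i, j) |: F]| = #|[set x | (x, y) \in F]| + (y == j).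
Proof.
move=> ijF; case: (eqVneq y j) => [->|yj].
  have -> : [set x | (x, j) \in (i, j) |: F] = i |: [set x | (x, j) \in F].
    by apply/setP => x; rewrite !inE xpair_eqE eqxx andbT.
  by rewrite cardsU1 inE ijF addnC.
by rewrite addn0; apply: eq_card => x; rewrite !inE xpair_eqE (negbTE yj) andbF.
Qed.

Lemma realizable_set0 a b : \sum_x a x = \sum_x b x -> cut_condition set0 a b ->
  realizable set0 a b.
Proof.
move=> sab cut; have := cut setT set0.
rewrite big_set0 /capacity big_set0 addn0 (eq_bigl xpredT) => [sa0|x]; last first.
  exact: in_setT.
have a0 x : a x = 0.
  by apply/eqP; rewrite -leqn0 (leq_trans _ sa0) // (bigD1 x) ?leq_addr.
have b0 y : b y = 0.
  by apply/eqP; rewrite -leqn0 (leq_trans _ sa0) // sab (bigD1 y) ?leq_addr.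
exists set0; split=> [|x|y]; rewrite ?sub0set ?a0 ?b0 // -(cards0 T);
  by apply: eq_card => z; rewrite !inE.
Qed.

Lemma realizable_add E a b i j : (i, j) \in E -> 0 < a i -> 0 < b j ->
  realizable (E :\ (i, j)) (dec_at a i) (dec_at b j) -> realizable E a b.
Proof.
move=> ijE ai bj [F [FE Fa Fb]].
have ijF : (i, j) \notin F by apply/negP => /(subsetP FE); rewrite !inE eqxx.
exists ((i, j) |: F); split.
- by rewrite subUset sub1set ijE (subset_trans FE) ?subsetDl.
- move=> x; rewrite card_row_setU1 // Fa /dec_at.
  by case: eqP => [->|_]; rewrite ?subnK ?subn0 ?addn0.
- move=> y; rewrite card_col_setU1 // Fb /dec_at.
  by case: eqP => [->|_]; rewrite ?subnK ?subn0 ?addn0.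
Qed.

Definition tight E a b I K :=
  \sum_(i in I) a i = \sum_(j in K) b j + capacity E I K.

Lemma tight_of_violated E a b e I K : e \in E -> cut_condition E a b ->
  \sum_(j in K) b j + capacity (E :\ e) I K < \sum_(i in I) a i ->
  [/\ e.1 \in I, e.2 \notin K & tight E a b I K].
Proof.
move=> eE cut viol; have := cut I K; rewrite /tight (capacity_setD1 _ _ eE).
by case: (e.1 \in I); case: (e.2 \in K) => /= cutIK; split=> //; lia.
Qed.

Lemma tight_cut_pos E a b e I K : e \in E -> cut_condition E a b ->
  e.1 \in I -> e.2 \notin K -> tight E a b I K -> 0 < a e.1 /\ 0 < b e.2.
Proof.
move=> eE cut eI eK tIK; split.
- have := cut (I :\ e.1) K.
  have := ltn_capacity eE (subsetDl I [set e.1]) (subxx K) eI eK.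
  rewrite !inE eqxx; move: tIK; rewrite /tight (big_setD1 _ eI) /=; lia.
- have := cut I (e.2 |: K).
  have := ltn_capacity eE (subxx I) (subsetUr [set e.2] K) eI eK.
  rewrite !inE eqxx orbT (big_setU1 _ eK) /=; move: tIK; rewrite /tight; lia.
Qed.

Lemma tight_cuts_uncrossed E a b e I1 K1 I2 K2 : e \in E -> cut_condition E a b ->
  e.1 \in I1 -> e.2 \notin K1 -> e.1 \notin I2 -> e.2 \in K2 ->
  tight E a b I1 K1 -> tight E a b I2 K2 -> False.
Proof.
move=> eE cut eI1 eK1 eI2 eK2 t1 t2.
have := capacity_submod_lt eE eI1 eK1 eI2 eK2.
have := cut (I1 :|: I2) (K1 :|: K2); have := cut (I1 :&: I2) (K1 :&: K2).
have := sum_setUI a I1 I2; have := sum_setUI b K1 K2.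
move: t1 t2; rewrite /tight; lia.
Qed.

Lemma cut_condition_dec_at E a b e I K : e \in E -> cut_condition E a b ->
  e.1 \in I -> e.2 \notin K -> tight E a b I K ->
  cut_condition (E :\ e) (dec_at a e.1) (dec_at b e.2).
Proof.
move=> eE cut eI eK tIK I2 K2; rewrite leqNgt; apply/negP => viol.
have [ae be] := tight_cut_pos eE cut eI eK tIK.
have := sum_dec_at (fun x => x \in I2) ae; have := sum_dec_at (fun x => x \in K2) be.
have := cut I2 K2; rewrite (capacity_setD1 _ _ eE) /= => cut2 db da.
have [eI2 eK2 tI2K2] : [/\ e.1 \notin I2, e.2 \in K2 & tight E a b I2 K2].
  rewrite /tight (capacity_setD1 _ _ eE) /=; move: viol cut2 db da.
  by case: (e.1 \in I2); case: (e.2 \in K2) => /= *; split=> //; lia.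
exact: (tight_cuts_uncrossed eE cut eI eK eI2 eK2 tIK tI2K2).
Qed.

Theorem cut_condition_realizable E a b :
  \sum_x a x = \sum_x b x -> cut_condition E a b -> realizable E a b.
Proof.
have [N] := ubnP #|E|; elim: N E a b => // N IH E a b ltEN sab cut.
have [E0|[[i j] ijE]] := set_0Vmem E.
  by rewrite E0 in cut *; exact: realizable_set0.
have ltE : #|E :\ (i, j)| < N by move: ltEN; rewrite (cardsD1 (i, j) E) ijE.
have [/forallP cut'|] := boolP [forall I : {set T}, forall K : {set T},
    \sum_(x in I) a x <= \sum_(y in K) b y + capacity (E :\ (i, j)) I K].
  have [F [FE Fa Fb]] := IH _ a b ltE sab (fun I => forallP (cut' I)).
  by exists F; split=> //; apply: subset_trans FE (subsetDl _ _).
rewrite negb_forall => /existsP[I]; rewrite negb_forall => /existsP[K].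
rewrite -ltnNge => viol; have [iI jK tIK] := tight_of_violated ijE cut viol.
have [ai bj] : 0 < a i /\ 0 < b j := tight_cut_pos ijE cut iI jK tIK.
apply: (realizable_add ijE ai bj (IH _ _ _ ltE _ _)).
  by have := sum_dec_at xpredT ai; have := sum_dec_at xpredT bj; rewrite sab /=; lia.
exact: (cut_condition_dec_at ijE cut iI jK tIK).
Qed.

Definition offdiag : {set T * T} := [set x | x.1 != x.2].

Lemma capacity_offdiag I K : capacity offdiag I K + #|I :&: ~: K| = #|I| * #|~: K|.
Proof.
have -> : #|I| * #|~: K| = \sum_(x : T * T) ((x.1 \in I) && (x.2 \notin K)).
  rewrite -cardsX (sum_indicator (fun x : T * T => _)).
  by apply: eq_card => -[u v]; rewrite !inE.
rewrite [RHS](bigID (mem offdiag)) /=; congr (_ + _).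
rewrite (reindex_onto (fun y => (y, y)) fst) => [|[u v]]; last first.
  by rewrite !inE negbK /= => /eqP->.
rewrite (eq_bigl xpredT) => [|y]; last by rewrite !inE /= eqxx.
by rewrite /= sum_indicator; apply: eq_card => y; rewrite !inE.
Qed.

End Realizability.

Section ThresholdArithmetic.
Local Open Scope Z_scope.

(* With [S = n cbar], [k] plays the role of [ceil k_*]: the second condition is [k >= k_*]
   squared out, the third is [M <= n (cbar - m) / k + m]; it is waived for [k = m + 1],
   which covers a negative discriminant. *)
Definition degree_threshold (n m M S k : Z) : Prop :=
  [/\ m + 1 <= k, (m + 1) * (m + 1) + S <= (k - m - 1) * (k - m - 1) + 2 * n * m
    & k = m + 1 \/ k * (M - m) + n * m <= S].

Lemma threshold_excess_bound n m M S k p :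
  0 <= m -> M <= n - 1 -> n * m <= S <= n * M -> m < p <= M -> p < k ->
  (m + 1) * (m + 1) + S <= (k - m - 1) * (k - m - 1) + 2 * n * m ->
  k * (M - m) + n * m <= S -> p * (M - m) <= (p - m) * (k - m) + m * (n - m) - p.
Proof.
move=> m0 Mn [nmS SnM] [mp pM] pk disc Mk.
have kD : k * (M - m) <= k * k - 2 * k * (m + 1) + n * m by lia.
have kn : k <= n by nia.
have slack : 0 <= m * (k - p) * (n - k) by apply: Z.mul_nonneg_nonneg; nia.
rewrite (Z.mul_le_mono_pos_l _ _ k); last by lia.
have -> : k * ((p - m) * (k - m) + m * (n - m) - p) =
  p * (k * k - 2 * k * (m + 1) + n * m) + m * (k - p) * (n - k) + p * k by ring.
nia.
Qed.

(* The disjuncts compare [S + p t - p] with the three upper bounds [p M + (S - (n - t) m)],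
   [2 S - (2 n - p - t) m] and [(p + t) M] on [sum_I a + sum_{K^c} b]. *)
Lemma cut_slack n m M S k p t : degree_threshold n m M S k ->
  0 <= m <= M -> M <= n - 1 -> n * m <= S <= n * M -> 0 <= p <= t -> t <= n ->
  [\/ p * M - (n - t) * m <= p * t - p, S - (2 * n - p - t) * m <= p * t - p
    | (p + t) * M - S <= p * t - p].
Proof.
move=> [mk disc Mk] [m0 mM] Mn [nmS SnM] [p0 pt] tn.
have [Mt|tM] := Z.le_gt_cases (M + 1) t; first by apply: Or31; nia.
have [pm|mp] := Z.le_gt_cases p m; first by apply: Or31; nia.
have [kp|pk] := Z.le_gt_cases k p; first by apply: Or32; nia.
have {}Mk : k * (M - m) + n * m <= S by case: Mk => // km; lia.
have ex : p * (M - m) <= (p - m) * (k - m) + m * (n - m) - p.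
  by apply: (threshold_excess_bound (S := S)) => //; lia.
have [kt|tk] := Z.le_gt_cases k t; first by apply: Or31; nia.
apply: Or33; have : 0 <= (k - t) * ((M - m) - (p - m)) by nia.
nia.
Qed.

Lemma cut_sum_bound n m M S k p t x y : degree_threshold n m M S k ->
  0 <= m <= M -> M <= n - 1 -> n * m <= S <= n * M -> 0 <= p <= n -> 0 <= t <= n ->
  x <= p * M -> x + (n - p) * m <= S -> y <= t * M -> y + (n - t) * m <= S ->
  x + y <= S + p * t - Z.min p t.
Proof.
move=> thr mM Mn SnM p0 t0.
wlog pt : p t x y p0 t0 / p <= t => [hwlog|].
  have [|tp] := Z.le_ge_cases p t; first exact: hwlog.
  move=> xM xS yM yS; rewrite Z.min_comm Z.mul_comm Z.add_comm.
  exact: hwlog.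
have [] := cut_slack thr mM Mn SnM (conj (proj1 p0) pt) (proj2 t0); lia.
Qed.

End ThresholdArithmetic.

Lemma offdiag_cut_condition (T : finType) (a b : T -> nat) (n m M : nat) (k : Z) :
  #|T| = n -> (forall x, m <= a x <= M) -> (forall x, m <= b x <= M) -> M < n ->
  \sum_x a x = \sum_x b x ->
  degree_threshold (Z.of_nat n) (Z.of_nat m) (Z.of_nat M) (Z.of_nat (\sum_x a x)) k ->
  cut_condition (offdiag T) a b.
Proof.
move=> Tn ab bb Mn sab thr I K.
have [/andP[lI uI] /andP[lIc uIc]] := (sum_bounds I ab, sum_bounds (~: I) ab).
have [/andP[lK uK] /andP[lKc uKc]] := (sum_bounds K bb, sum_bounds (~: K) bb).
have := sum_setC a I; have := sum_setC b K; have := cardsC I; have := cardsC K.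
have := capacity_offdiag I K.
have : #|I :&: ~: K| <= minn #|I| #|~: K|.
  by rewrite leq_min !subset_leq_card ?subsetIl ?subsetIr.
rewrite -sab Tn => diag cap cK cI sb sa.
have [x _] : exists x, x \in T by apply/card_gt0P; rewrite Tn; apply: leq_ltn_trans Mn.
have mM : m <= M by case/andP: (ab x); apply: leq_trans.
suff : (Z.of_nat (\sum_(i in I) a i) + Z.of_nat (\sum_(j in ~: K) b j) <=
  Z.of_nat (\sum_x a x) + Z.of_nat #|I| * Z.of_nat #|~: K|
  - Z.min (Z.of_nat #|I|) (Z.of_nat #|~: K|))%Z by lia.
apply: (cut_sum_bound thr); lia.
Qed.

Lemma Rfloor_le x : (IZR (Rfloor x) <= x)%R.
Proof. by rewrite /Rfloor minus_IZR; have [] := archimed x; lra. Qed.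

Lemma Rceil_ge x : (x <= IZR (Rceil x))%R.
Proof. by rewrite /Rceil /Rfloor opp_IZR minus_IZR; have [] := archimed (- x); lra. Qed.

Lemma bound6_threshold n (a b : 'I_n -> nat) : 0 < n ->
  (Z.of_nat (dmax a b) <= bound6 a b)%Z ->
  exists k, degree_threshold (Z.of_nat n) (Z.of_nat (dmin a b)) (Z.of_nat (dmax a b))
    (Z.of_nat (\sum_(i < n) a i)) k.
Proof.
rewrite /bound6 /kk /kstar => n0.
have ncbar : (INR n * cbar a = INR (\sum_(i < n) a i))%R.
  by rewrite /cbar; field; apply: not_0_INR; lia.
have disc_eq : disc a b = ((INR (dmin a b) + 1) ^ 2 + INR (\sum_(i < n) a i)
                           - 2 * INR n * INR (dmin a b))%R by rewrite /disc -ncbar; ring.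
rewrite {}disc_eq; move: (dmin a b) (dmax a b) (\sum_(i < n) a i) (cbar a) ncbar.
move=> m M S c ncbar.
set D := ((INR m + 1) ^ 2 + INR S - 2 * INR n * INR m)%R.
have n_pos : (0 < INR n)%R by apply: lt_0_INR; lia.
case: Rle_dec => [D0 | Dneg] /= HM; last first.
  exists (Z.of_nat m + 1)%Z; split; [lia | | by left].
  apply: le_IZR; rewrite !(plus_IZR, mult_IZR, minus_IZR) -!INR_IZR_INZ.
  by rewrite /D in Dneg; lra.
set k := Rceil _ in HM *.
have := Rceil_ge (INR m + 1 + sqrt D); rewrite -/k => kstar_k.
have sqrtD_ge0 := sqrt_pos D.
have k_pos : (0 < IZR k)%R by have m0 := pos_INR m; lra.
exists k; split.
- by apply: le_IZR; rewrite plus_IZR -INR_IZR_INZ; lra.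
- apply: le_IZR; rewrite !(plus_IZR, mult_IZR, minus_IZR) -!INR_IZR_INZ.
  have : (sqrt D * sqrt D <= (IZR k - INR m - 1) * (IZR k - INR m - 1))%R.
    by apply: Rmult_le_compat; lra.
  by rewrite sqrt_sqrt // /D; lra.
- right; apply: le_IZR; rewrite !(plus_IZR, mult_IZR, minus_IZR) -!INR_IZR_INZ.
  have := Rfloor_le (INR n * (c - INR m) / IZR k + INR m).
  move/IZR_le: HM; rewrite -INR_IZR_INZ => HM floor_le.
  have : ((INR M - INR m) * IZR k <= INR n * (c - INR m))%R.
    apply: (Rmult_le_reg_r (/ IZR k)); first exact: Rinv_0_lt_compat.
    by field_simplify; lra.
  nra.
Qed.

Lemma bigmin_le (I : eqType) (r : seq I) (F : I -> nat) x i :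
  i \in r -> \big[minn/x]_(j <- r) F j <= F i.
Proof.
elim: r => // j r IHr; rewrite inE big_cons => /predU1P[<-|ir]; first exact: geq_minl.
exact: leq_trans (geq_minr _ _) (IHr ir).
Qed.

Lemma dmin_le n (a b : 'I_n -> nat) i : dmin a b <= minn (a i) (b i).
Proof. exact/bigmin_le/mem_index_enum. Qed.

Lemma dmax_ge n (a b : 'I_n -> nat) i : maxn (a i) (b i) <= dmax a b.
Proof. exact: (@leq_bigmax _ (fun i => maxn (a i) (b i)) i). Qed.

Theorem theorem6 (n : nat) (a b : 'I_n -> nat) :
  0 < n ->
  \sum_(i < n) a i = \sum_(i < n) b i ->
  dmin a b <= n - 1 ->
  (Z.of_nat (dmax a b) <= bound6 a b)%Z ->
  dmax a b <= n - 1 ->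
  graphic a b.
Proof.
(* [dmin a b <= n - 1] is implied by [dmax a b <= n - 1]. *)
move=> n0 sab _ hbound hmax.
have [k thr] := bound6_threshold n0 hbound.
have ab i : dmin a b <= a i <= dmax a b.
  have := dmin_le a b i; have := dmax_ge a b i.
  by rewrite leq_min geq_max => /andP[-> _] /andP[-> _].
have bb i : dmin a b <= b i <= dmax a b.
  have := dmin_le a b i; have := dmax_ge a b i.
  by rewrite leq_min geq_max => /andP[_ ->] /andP[_ ->].
have Mn : dmax a b < n by lia.
have := offdiag_cut_condition (card_ord n) ab bb Mn sab thr.
move=> /(cut_condition_realizable sab) [F [FE Fa Fb]].
exists (fun i j => (i, j) \in F); split=> //; split=> // i.
by apply/negP => /(subsetP FE); rewrite inE eqxx.
Qed.
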